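(* Let $\Phi$ be an irreducible root system of rank $r$. For any $i\neq j$ in $\{0,1,\dots,r\}$ with $\gcd(m_i,m_j)=1$, the set $\Phi\cap\mathbb Z\{\tilde\alpha_k: k\in\{0,\dots,r\}\setminus\{i,j\}\}$ (the root subsystem generated by the roots of the nodes of the affine Dynkin diagram remaining after deleting the nodes $\tilde\alpha_i,\tilde\alpha_j$) is a good root subsystem of $\Phi$. Conversely, every good root subsystem of $\Phi$ is $W$-conjugate to one obtained in this way.
   Context: Let $\Phi$ be an irreducible reduced crystallographic root system of rank $r$ with Weyl group $W$, $\{\alpha_1,\dots,\alpha_r\}$ a base, and $\theta=\sum_{i=1}^r m_i\alpha_i$ the highest root (each $m_i$ a positive integer). Set $m_0=1$, $\tilde\alpha_0=-\theta$ and $\tilde\alpha_i=\alpha_i$ for $1\le i\le r$; $m_i$ is the Dynkin label of $\tilde\alpha_i$. $\mathbb Z\{\cdot\}$ denotes the integral span. A root subsystem $\Psi\subseteq\Phi$ is closed if $\lambda,\mu\in\Psi$, $\lambda+\mu\in\Phi$ imply $\lambda+\mu\in\Psi$; $\operatorname{rk}\Psi=\dim\operatorname{Span}\Psi$. A good root subsystem of $\Phi$ is a closed root subsystem of rank $r-1$ maximal under inclusion among closed root subsystems of rank $r-1$. *)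

From HB Require Import structures.
From mathcomp Require Import all_boot all_order all_algebra.
From mathcomp Require Import reals.
Set Implicit Arguments. Unset Strict Implicit. Unset Printing Implicit Defensive.
Import Order.TTheory GRing.Theory Num.Theory.
Local Open Scope ring_scope.

Section RootSystems.
Variables (R : realType) (n : nat).
Notation V := 'rV[R]_n.

Definition dotv (u v : V) : R := (u *m v^T) 0 0.

Definition refl (a x : V) : V := x - (2 * dotv x a / dotv a a) *: a.

(* Matrix whose rows are the elements of s; its rank is dim Span s. *)
Definition mxs (s : seq V) : 'M[R]_(size s, n) := \matrix_(k < size s) s`_k.
Definition rk (s : seq V) : nat := \rank (mxs s).

Definition root_system (Phi : seq V) : Prop :=
  [/\ 0 \notin Phi,
      rk Phi = n,
      (forall a b, a \in Phi -> b \in Phi -> refl a b \in Phi) &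
      (forall a b, a \in Phi -> b \in Phi -> 2 * dotv b a / dotv a a \is a Num.int)].

Definition reduced (Phi : seq V) : Prop :=
  forall a (c : R), a \in Phi -> c *: a \in Phi -> c = 1 \/ c = -1.

(* Phi cannot be split into two nonempty mutually orthogonal parts. *)
Definition irreducible (Phi : seq V) : Prop :=
  Phi != [::] /\
  forall P : pred V,
    (exists2 a, a \in Phi & P a) -> (exists2 b, b \in Phi & ~~ P b) ->
    exists a, exists b, [/\ a \in Phi, b \in Phi, P a, ~~ P b & dotv a b != 0].

Definition ncomb (alpha : 'I_n -> V) (c : 'I_n -> nat) : V :=
  \sum_(i < n) (c i)%:R *: alpha i.

Definition is_base (Phi : seq V) (alpha : 'I_n -> V) : Prop :=
  [/\ forall i, alpha i \in Phi,
      row_free (\matrix_(i < n) alpha i) &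
      forall b, b \in Phi -> exists c : 'I_n -> nat,
        b = ncomb alpha c \/ b = - ncomb alpha c].

Definition highest_root (Phi : seq V) (alpha : 'I_n -> V) (theta : V) : Prop :=
  theta \in Phi /\
  forall b, b \in Phi -> exists c : 'I_n -> nat, theta - b = ncomb alpha c.

Definition closed_subsystem (Phi Psi : seq V) : Prop :=
  [/\ {subset Psi <= Phi},
      (forall a b, a \in Psi -> b \in Psi -> refl a b \in Psi) &
      (forall a b, a \in Psi -> b \in Psi -> a + b \in Phi -> a + b \in Psi)].

Definition good_subsystem (Phi Psi : seq V) : Prop :=
  [/\ closed_subsystem Phi Psi,
      rk Psi = n.-1 &
      forall Psi' : seq V, closed_subsystem Phi Psi' -> rk Psi' = n.-1 ->
        {subset Psi <= Psi'} -> {subset Psi' <= Psi}].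

Definition weyl (Phi : seq V) (w : V -> V) : Prop :=
  exists s : seq V, {subset s <= Phi} /\
    forall x, w x = foldr (fun a y => refl a y) x s.

(* Affine simple roots: index 0 is -theta, index i+1 is alpha_i. *)
Definition atil (alpha : 'I_n -> V) (theta : V) (k : 'I_n.+1) : V :=
  match unlift ord0 k with None => - theta | Some i => alpha i end.

Definition mlab (m : 'I_n -> nat) (k : 'I_n.+1) : nat :=
  match unlift ord0 k with None => 1%N | Some i => m i end.

Definition in_zspan_del (alpha : 'I_n -> V) (theta : V) (i j : 'I_n.+1) (b : V) : Prop :=
  exists c : 'I_n.+1 -> int,
    b = \sum_(k < n.+1 | (k != i) && (k != j)) (c k)%:~R *: atil alpha theta k.

End RootSystems.

From HB Require Import structures.
From mathcomp Require Import all_boot all_order all_algebra.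
From mathcomp Require Import reals.
From mathcomp Require Import ring lra zify.
Import Order.TTheory GRing.Theory Num.Theory.
Local Open Scope ring_scope.
Set Implicit Arguments. Unset Strict Implicit. Unset Printing Implicit Defensive.

(* A good subsystem spans a hyperplane [v^⊥] and, being maximal, consists of
   all roots orthogonal to [v].  Conjugate [v] to a dominant [u]: a root
   orthogonal to [u] has zero coordinate at every simple root not orthogonal
   to [u], and maximality leaves exactly one such simple root [alpha_j], so the
   subsystem is conjugate to the one of the affine diagram without the nodes
   [0] and [j] (and [m_0 = 1] is coprime to [m_j]).  Conversely, for coprime
   labels the vector [m_j ω_i - m_i ω_j] is orthogonal to every remaining
   affine simple root, and coprimality makes the roots orthogonal to it exactly
   the roots in the integral span of the remaining ones.

   The dominant conjugate is reached by reflecting in simple roots pairing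
   negatively with the current vector: each step raises its pairing with
   [ρ^∨] by a uniform amount, while all its pairings with roots stay among the
   finitely many values [<v, Φ>], which bounds that pairing. *)

Lemma seq_norm_bound (R : numDomainType) (s : seq R) :
  exists2 M, 0 <= M & forall x, x \in s -> `|x| <= M.
Proof.
elim: s => [|a s [M M0 HM]]; first by exists 0.
exists (`|a| + M) => [|x]; first by rewrite addr_ge0.
rewrite inE => /orP[/eqP->|/HM xM]; first by rewrite lerDl.
by rewrite (le_trans xM) // lerDr.
Qed.

Lemma seq_norm_gap (R : realDomainType) (s : seq R) :
  exists2 d, 0 < d & forall x, x \in s -> x != 0 -> d <= `|x|.
Proof.
elim: s => [|a s [d d0 Hd]]; first by exists 1.
have [->|a0] := eqVneq a 0.
  by exists d => // x; rewrite inE => /orP[/eqP->|/Hd //]; rewrite eqxx.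
exists (Num.min d `|a|) => [|x]; first by rewrite lt_min d0 normr_gt0.
by rewrite inE ge_min => /orP[/eqP->|/Hd xd /xd->]; rewrite ?lexx ?orbT.
Qed.

Lemma sumr_mul_delta (R : pzSemiRingType) (I : finType) (F : I -> R) i :
  \sum_k F k * (k == i)%:R = F i.
Proof.
rewrite (bigD1 i) //= eqxx mulr1 big1 ?addr0 // => k /negbTE ki.
by rewrite ki mulr0.
Qed.

Lemma coprime_int_eq (a b : int) (p q : nat) : coprime p q ->
  a * q%:Z = b * p%:Z -> exists t : int, a = t * p%:Z /\ b = t * q%:Z.
Proof.
case: p => [|p] cop E.
  move: cop; rewrite /coprime gcd0n => /eqP q1; subst q.
  by exists b; split; lia.
have : (p.+1%:Z %| a * q%:Z)%Z by rewrite E dvdz_mull.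
rewrite Gauss_dvdzl ?coprimezE // => /dvdzP[t at_].
exists t; split => //; apply: (mulIf (x := p.+1%:Z)) => //.
by rewrite -E at_ mulrAC.
Qed.

Section InnerProduct.
Variables (R : realType) (n : nat).
Notation V := 'rV[R]_n.
Implicit Types u v x y z a b : V.

Lemma dotvE u v : dotv u v = \sum_i u 0 i * v 0 i.
Proof. by rewrite /dotv mxE; apply: eq_bigr => i _; rewrite mxE. Qed.

Lemma dotvC u v : dotv u v = dotv v u.
Proof. by rewrite !dotvE; apply: eq_bigr => i _; rewrite mulrC. Qed.

Lemma dotvDl u v x : dotv (u + v) x = dotv u x + dotv v x.
Proof. by rewrite !dotvE -big_split; apply: eq_bigr => i _; rewrite mxE mulrDl. Qed.

Lemma dotvZl (c : R) u x : dotv (c *: u) x = c * dotv u x.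
Proof. by rewrite !dotvE mulr_sumr; apply: eq_bigr => i _; rewrite mxE mulrA. Qed.

Lemma dotvNl u x : dotv (- u) x = - dotv u x.
Proof. by rewrite -scaleN1r dotvZl mulN1r. Qed.

Lemma dotvBl u v x : dotv (u - v) x = dotv u x - dotv v x.
Proof. by rewrite dotvDl dotvNl. Qed.

Lemma dotv0l x : dotv 0 x = 0.
Proof. by rewrite -(scale0r 0) dotvZl mul0r. Qed.

Lemma dotvZr (c : R) u x : dotv x (c *: u) = c * dotv x u.
Proof. by rewrite dotvC dotvZl dotvC. Qed.

Lemma dotvBr u v x : dotv x (u - v) = dotv x u - dotv x v.
Proof. by rewrite !(dotvC x) dotvBl. Qed.

Lemma dotv0r x : dotv x 0 = 0.
Proof. by rewrite dotvC dotv0l. Qed.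

Lemma dotv_suml (I : Type) (s : seq I) (P : pred I) (F : I -> V) x :
  dotv (\sum_(i <- s | P i) F i) x = \sum_(i <- s | P i) dotv (F i) x.
Proof. by elim/big_rec2: _ => [|i y1 y2 _ <-]; rewrite ?dotv0l ?dotvDl. Qed.

Lemma dotv_sumr (I : Type) (s : seq I) (P : pred I) (F : I -> V) x :
  dotv x (\sum_(i <- s | P i) F i) = \sum_(i <- s | P i) dotv x (F i).
Proof. by rewrite dotvC dotv_suml; apply: eq_bigr => i _; rewrite dotvC. Qed.

Lemma dotvv_ge0 x : 0 <= dotv x x.
Proof. by rewrite dotvE sumr_ge0 // => i _; rewrite -expr2 sqr_ge0. Qed.

Lemma dotvv_eq0 x : (dotv x x == 0) = (x == 0).
Proof.
apply/idP/idP => [|/eqP->]; last by rewrite dotv0l.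
rewrite dotvE psumr_eq0 => [/allP x0|i _]; last by rewrite -expr2 sqr_ge0.
apply/eqP/rowP => i; rewrite mxE.
by have := x0 i (mem_index_enum _); rewrite /= mulf_eq0 orbb => /eqP.
Qed.

Lemma refl_adj a x y : dotv (refl a x) y = dotv x (refl a y).
Proof.
rewrite /refl dotvBl dotvBr dotvZl dotvZr (dotvC a y); congr (_ - _).
by ring.
Qed.

Lemma reflK a x : dotv a a != 0 -> refl a (refl a x) = x.
Proof.
move=> a0; rewrite {1}/refl dotvBl dotvZl.
set c := 2 * dotv x a / dotv a a.
have -> : 2 * (dotv x a - c * dotv a a) / dotv a a = - c by rewrite /c; field.
by rewrite /refl -/c scaleNr opprK subrK.
Qed.

Lemma refl_isometry a x y : dotv a a != 0 -> dotv (refl a x) (refl a y) = dotv x y.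
Proof. by move=> a0; rewrite refl_adj reflK. Qed.

Lemma refl_perp a x z : dotv x z = 0 -> dotv a z = 0 -> dotv (refl a x) z = 0.
Proof. by move=> xz az; rewrite /refl dotvBl dotvZl xz az mulr0 subrr. Qed.

Definition wact (s : seq V) x : V := foldr (fun a y => refl a y) x s.

Lemma wact_cat s t x : wact (s ++ t) x = wact s (wact t x).
Proof. exact: foldr_cat. Qed.

Section NonIsotropicWord.
Variable s : seq V.
Hypothesis s_aniso : all (fun a => dotv a a != 0) s.

Lemma wact_revK : cancel (wact s) (wact (rev s)).
Proof.
elim: s s_aniso => [//|a t IH] /= /andP[a0 t0] x.
by rewrite rev_cons /wact foldr_rcons -/(wact _ _) reflK // IH.
Qed.

Lemma wactK_rev : cancel (wact (rev s)) (wact s).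
Proof.
elim: s s_aniso => [//|a t IH] /= /andP[a0 t0] x.
by rewrite rev_cons -cats1 wact_cat /= IH // reflK.
Qed.

Lemma wact_isometry x y : dotv (wact s x) (wact s y) = dotv x y.
Proof.
by elim: s s_aniso => [//|a t IH] /= /andP[a0 t0]; rewrite refl_isometry // IH.
Qed.

End NonIsotropicWord.

Lemma mxs_rowE (s : seq V) (k : 'I_(size s)) : row k (mxs s) = s`_k.
Proof. exact: rowK. Qed.

Lemma mem_mxs (s : seq V) x : x \in s -> (x <= mxs s)%MS.
Proof.
move=> xs; have ks : (index x s < size s)%N by rewrite index_mem.
by rewrite -(nth_index 0 xs) -(mxs_rowE (Ordinal ks)) row_sub.
Qed.

Lemma mxs_sub (s : seq V) m (M : 'M[R]_(m, n)) :
  (forall x, x \in s -> (x <= M)%MS) -> (mxs s <= M)%MS.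
Proof. by move=> sM; apply/row_subP => k; rewrite mxs_rowE sM ?mem_nth. Qed.

Lemma rk_subset (s t : seq V) : {subset s <= t} -> (rk s <= rk t)%N.
Proof. by move=> st; apply/mxrankS/mxs_sub => x /st /mem_mxs. Qed.

Lemma mxs_mul_perp (s : seq V) z : (forall b, b \in s -> dotv b z = 0) ->
  mxs s *m z^T = 0.
Proof.
move=> sz; apply/matrixP => k j; rewrite ord1 !mxE -[RHS](sz s`_k) ?mem_nth //.
by rewrite /dotv !mxE; apply: eq_bigr => l _; rewrite !mxE.
Qed.

Lemma dotv_span_perp (s : seq V) x z : (x <= mxs s)%MS ->
  (forall b, b \in s -> dotv b z = 0) -> dotv x z = 0.
Proof.
by case/submxP => D -> /mxs_mul_perp sz; rewrite /dotv -mulmxA sz mulmx0 mxE.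
Qed.

Lemma rk_perp_lt (s : seq V) z : z != 0 -> (forall b, b \in s -> dotv b z = 0) ->
  (rk s < n)%N.
Proof.
move=> z0 sz; rewrite ltn_neqAle rank_leq_col andbT; apply: contra z0 => full.
by rewrite -dotvv_eq0 (dotv_span_perp _ sz) // submx_full.
Qed.

Lemma perp_exists (s : seq V) : (rk s < n)%N ->
  exists2 z, z != 0 & forall b, b \in s -> dotv b z = 0.
Proof.
move=> lt_s_n; set K := kermx (mxs s)^T.
have : K != 0 by rewrite -mxrank_eq0 mxrank_ker mxrank_tr subn_eq0 -ltnNge.
move=> K0; have [k Kk] : exists k, row k K != 0.
  apply/existsP; apply: contraR K0 => /existsPn K0; apply/eqP/row_matrixP => k.
  by rewrite row0; apply/eqP/negPn/K0.
exists (row k K) => // b bs.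
have /matrixP/(_ 0 (Ordinal (etrans (index_mem b s) bs))) : row k K *m (mxs s)^T = 0.
  by apply/sub_kermxP; rewrite row_sub.
rewrite !mxE => <-; rewrite dotvC dotvE; apply: eq_bigr => j _.
by rewrite !mxE nth_index.
Qed.

End InnerProduct.

Section IntegralSpan.
Variables (R : realType) (n : nat) (alpha : 'I_n -> 'rV[R]_n) (theta : 'rV[R]_n).
Notation V := 'rV[R]_n.
Notation atl := (atil alpha theta).

Definition zcomb (I : finType) (f : I -> V) (e : I -> int) : V :=
  \sum_k (e k)%:~R *: f k.

Lemma ncomb_zcomb c : ncomb alpha c = zcomb alpha (fun k => (c k)%:Z).
Proof. by apply: eq_bigr => k _; rewrite -pmulrn. Qed.

Lemma oppr_zcomb (I : finType) (f : I -> V) e : - zcomb f e = zcomb f (fun k => - e k).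
Proof. by rewrite /zcomb -sumrN; apply: eq_bigr => k _; rewrite intrN scaleNr. Qed.

Definition ext_node0 (e : 'I_n -> int) (k : 'I_n.+1) : int :=
  if unlift ord0 k is Some l then e l else 0.

Lemma zcomb_atil_ext_node0 e : zcomb atl (ext_node0 e) = zcomb alpha e.
Proof.
rewrite /zcomb big_ord_recl /ext_node0 unlift_none scale0r add0r.
by apply: eq_bigr => l _; rewrite /atil liftK.
Qed.

Section DeletedNodes.
Variables i j : 'I_n.+1.
Notation zs := (in_zspan_del alpha theta i j).

Lemma zspan_del_zcomb e : e i = 0 -> e j = 0 -> zs (zcomb atl e).
Proof.
move=> ei ej; exists e; rewrite [RHS]big_mkcond; apply: eq_bigr => k _.
by case: eqP => [->|_]; case: eqP => [->|_] //=; rewrite ?ei ?ej scale0r.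
Qed.

Lemma atil_zspan_del k : k != i -> k != j -> zs (atl k).
Proof.
move=> ki kj; exists (fun l => (l == k)%:Z).
rewrite (bigD1 k) /=; last by rewrite ki kj.
by rewrite eqxx scale1r big1 ?addr0 // => l /andP[_ /negbTE->]; rewrite scale0r.
Qed.

Lemma zspan_delB b a (z : int) : zs b -> zs a -> zs (b - z%:~R *: a).
Proof.
case=> eb ->; case=> ea ->; exists (fun k => eb k - z * ea k).
rewrite scaler_sumr -sumrB; apply: eq_bigr => k _.
by rewrite scalerA -intrM -scalerBl -intrB.
Qed.

Lemma zspan_delD b a : zs b -> zs a -> zs (b + a).
Proof. by move=> zb za; have := zspan_delB (-1) zb za; rewrite scaleNr scale1r opprK. Qed.

Lemma zspan_del_perp z c : (forall k, k != i -> k != j -> dotv (atl k) z = 0) ->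
  zs c -> dotv c z = 0.
Proof.
move=> atl_z [e ->]; rewrite dotv_suml big1 // => k /andP[ki kj].
by rewrite dotvZl atl_z ?mulr0.
Qed.

End DeletedNodes.
End IntegralSpan.

Section RootSystem.
Variables (R : realType) (n : nat) (Phi : seq 'rV[R]_n) (alpha : 'I_n -> 'rV[R]_n).
Hypotheses (HR : root_system Phi) (HB : is_base Phi alpha).
Notation V := 'rV[R]_n.
Implicit Types u v x y z a b : V.

Lemma root_neq0 b : b \in Phi -> b != 0.
Proof. by case: HR => Phi0 _ _ _ bPhi; apply: contraNneq Phi0 => <-. Qed.

Lemma root_norm_gt0 b : b \in Phi -> 0 < dotv b b.
Proof. by move/root_neq0; rewrite lt_def dotvv_ge0 dotvv_eq0 andbT. Qed.

Lemma root_aniso (s : seq V) : {subset s <= Phi} -> all (fun a => dotv a a != 0) s.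
Proof. by move=> sPhi; apply/allP => a /sPhi/root_norm_gt0; rewrite lt0r => /andP[]. Qed.

Lemma refl_root a b : a \in Phi -> b \in Phi -> refl a b \in Phi.
Proof. by case: HR => _ _ Phi_refl _; apply: Phi_refl. Qed.

Lemma rootN a : a \in Phi -> - a \in Phi.
Proof.
move=> aPhi; have := refl_root aPhi aPhi.
rewrite /refl mulfK; last by rewrite lt0r_neq0 ?root_norm_gt0.
by rewrite scaler_nat mulr2n opprD addrA subrr add0r.
Qed.

Lemma wact_root (s : seq V) b : {subset s <= Phi} -> b \in Phi -> wact s b \in Phi.
Proof.
elim: s => [//|a s IH] sPhi bPhi /=.
apply: refl_root; first exact/sPhi/mem_head.
by apply: IH => // x xs; rewrite sPhi // inE xs orbT.
Qed.

Lemma simple_root k : alpha k \in Phi.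
Proof. by case: HB. Qed.

Definition base_mx : 'M[R]_n := \matrix_(i < n) alpha i.

Lemma base_mx_unit : base_mx \in unitmx.
Proof. by case: HB => _ free _; rewrite -row_free_unit. Qed.

Definition coweight (j : 'I_n) : V := row j (invmx base_mx)^T.

Lemma dotv_coweight k j : dotv (alpha k) (coweight j) = (k == j)%:R.
Proof.
have /matrixP/(_ k j) := mulmxV base_mx_unit; rewrite !mxE => <-.
by rewrite dotvE; apply: eq_bigr => l _; rewrite !mxE.
Qed.

Lemma coweight_neq0 j : coweight j != 0.
Proof.
apply: contra_neq (@oner_neq0 R) => cj0.
by have := dotv_coweight j j; rewrite cj0 dotv0r eqxx.
Qed.

Lemma base_coordsE x : x = \sum_k (x *m invmx base_mx) 0 k *: alpha k.
Proof.
rewrite -{1}(mulmxKV base_mx_unit x) mulmx_sum_row.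
by apply: eq_bigr => k _; rewrite rowK.
Qed.

Definition dominant u := forall k, 0 <= dotv u (alpha k).

Section Dominance.
Variable v : V.

(* Holds along the Weyl orbit of [v], and confines that orbit to a bounded region. *)
Definition pairings_within u :=
  forall b, b \in Phi -> exists2 b', b' \in Phi & dotv u b = dotv v b'.

Lemma pairings_within_self : pairings_within v.
Proof. by move=> b bPhi; exists b. Qed.

Lemma pairings_within_refl u a :
  a \in Phi -> pairings_within u -> pairings_within (refl a u).
Proof. by move=> aPhi uv b bPhi; rewrite refl_adj; apply/uv/refl_root. Qed.

Let rho : V := \sum_k coweight k.

Lemma dotv_simple_rho k : dotv (alpha k) rho = 1.
Proof.
rewrite dotv_sumr (bigD1 k) //= dotv_coweight eqxx big1 ?addr0 // => l lk.
by rewrite dotv_coweight eq_sym (negbTE lk).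
Qed.

Lemma pairings_within_bounded :
  exists B, forall u, pairings_within u -> dotv u rho <= B.
Proof.
have [M _ HM] := seq_norm_bound [seq dotv v b | b <- Phi].
set y := rho *m invmx base_mx; exists (\sum_k `|y 0 k| * M) => u uv.
rewrite [rho]base_coordsE dotv_sumr; apply: ler_sum => k _.
rewrite dotvZr (le_trans (ler_norm _)) // normrM ler_wpM2l //.
by have [b' b'Phi ->] := uv _ (simple_root k); rewrite HM ?map_f.
Qed.

Lemma refl_simple_increase :
  exists2 del, 0 < del & forall u k, pairings_within u -> dotv u (alpha k) < 0 ->
    dotv u rho + del <= dotv (refl (alpha k) u) rho.
Proof.
have [d d0 Hd] := seq_norm_gap [seq dotv v b | b <- Phi].
have [N N0 HN] := seq_norm_bound [seq dotv b b | b <- Phi].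
exists (2 * d / (N + 1)) => [|u k uv neg]; first by rewrite divr_gt0 ?mulr_gt0 // ltr_wpDl.
have [b' b'Phi eb] := uv _ (simple_root k).
have da : d <= - dotv u (alpha k).
  by rewrite -ltr0_norm // eb Hd ?map_f // -eb lt_eqF.
have p0 := root_norm_gt0 (simple_root k).
have pN : dotv (alpha k) (alpha k) <= N.
  by rewrite (le_trans (ler_norm _)) // HN ?(map_f (fun b => dotv b b)) ?simple_root.
rewrite /refl dotvBl dotvZl dotv_simple_rho mulr1 lerD2l.
set p := dotv (alpha k) (alpha k) in p0 pN *; set a := dotv u (alpha k) in neg da *.
rewrite ler_pdivrMr ?ltr_wpDl // -mulNr mulrAC ler_pdivlMr //.
nra.
Qed.

Lemma dominant_conjugate :
  exists2 s, {subset s <= Phi} & dominant (wact s v).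
Proof.
have [B bounded] := pairings_within_bounded.
have [del del0 increase] := refl_simple_increase.
suff climb : forall K u, pairings_within u -> B - dotv u rho < K%:R * del ->
    exists2 s, {subset s <= Phi} & dominant (wact s u).
  apply: (climb (Num.bound ((B - dotv v rho) / del))); first exact: pairings_within_self.
  rewrite -ltr_pdivrMr //; apply: archi_boundP.
  by rewrite divr_ge0 ?(ltW del0) // subr_ge0; apply/bounded/pairings_within_self.
elim=> [|K IH] u uv ltK.
  by move: (bounded u uv) ltK; rewrite mul0r; lra.
have [Du|] := boolP [forall k, 0 <= dotv u (alpha k)].
  by exists [::] => // k; apply: (forallP Du).
case/forallPn => k; rewrite -ltNge => neg.
have ltK' : B - dotv (refl (alpha k) u) rho < K%:R * del.
  by have := increase u k uv neg; rewrite -natr1 mulrDl mul1r in ltK; lra.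
have [s sPhi Ds] := IH _ (pairings_within_refl (simple_root k) uv) ltK'.
exists (s ++ [:: alpha k]) => [x|]; last by rewrite /dominant wact_cat.
by rewrite mem_cat inE => /orP[/sPhi //|/eqP->]; apply: simple_root.
Qed.

End Dominance.

Lemma root_zcoords b : b \in Phi -> exists e, b = zcomb alpha e.
Proof.
move=> bPhi; case: HB => _ _ /(_ b bPhi) [c [->|->]].
  by exists (fun k => (c k)%:Z); rewrite ncomb_zcomb.
by exists (fun k => - (c k)%:Z); rewrite ncomb_zcomb oppr_zcomb.
Qed.

Lemma dotv_zcomb_coweight e j : dotv (zcomb alpha e) (coweight j) = (e j)%:~R.
Proof.
rewrite dotv_suml (bigD1 j) //= dotvZl dotv_coweight eqxx mulr1.
by rewrite big1 ?addr0 // => k kj; rewrite dotvZl dotv_coweight (negbTE kj) mulr0.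
Qed.

(* Positivity of the coordinates of a root makes its pairing with a dominant
   vector a sum of nonnegative terms. *)
Lemma dominant_perp_coweight u j b : dominant u -> dotv u (alpha j) != 0 ->
  b \in Phi -> dotv b u = 0 -> dotv b (coweight j) = 0.
Proof.
move=> Du uj bPhi bu; case: HB => _ _ /(_ b bPhi) [c bc].
have cu : dotv (ncomb alpha c) u = 0.
  by case: bc bu => ->; rewrite ?dotvNl // => /eqP; rewrite oppr_eq0 => /eqP.
have cj : c j = 0%N.
  move: cu; rewrite /ncomb dotv_suml => /eqP; rewrite psumr_eq0 => [|k _]; last first.
    by rewrite dotvZl dotvC mulr_ge0.
  move=> /allP/(_ j (mem_index_enum _)); rewrite /= dotvZl dotvC mulf_eq0.
  by rewrite (negbTE uj) orbF pnatr_eq0 => /eqP.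
by case: bc => ->; rewrite ?dotvNl ncomb_zcomb dotv_zcomb_coweight cj ?oppr0.
Qed.

Lemma perp_closed z : closed_subsystem Phi [seq b <- Phi | dotv b z == 0].
Proof.
split=> [b|a b|a b]; rewrite !mem_filter; first by case/andP.
  case/andP=> /eqP az aPhi /andP[/eqP bz bPhi].
  by rewrite refl_root // andbT; apply/eqP/refl_perp.
case/andP=> /eqP az aPhi /andP[/eqP bz bPhi] abPhi.
by rewrite abPhi andbT dotvDl az bz addr0.
Qed.

Lemma good_subsystemE Psi z : good_subsystem Phi Psi -> z != 0 ->
  (forall b, b \in Psi -> dotv b z = 0) ->
  forall b, b \in Psi <-> b \in Phi /\ dotv b z = 0.
Proof.
case=> [[PsiPhi _ _] rkPsi maxPsi] z0 Psi_z b.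
split=> [bPsi|[bPhi bz]]; first by split; [apply: PsiPhi | apply: Psi_z].
set Psi' := [seq b <- Phi | dotv b z == 0].
have sPsi : {subset Psi <= Psi'} by move=> a aPsi; rewrite mem_filter Psi_z // eqxx PsiPhi.
have rkPsi' : rk Psi' = n.-1.
  have : (rk Psi' < n)%N.
    by apply: (rk_perp_lt z0) => a; rewrite mem_filter => /andP[/eqP].
  have := rk_subset sPsi; rewrite rkPsi; lia.
by apply: (maxPsi _ (perp_closed z) rkPsi' sPsi); rewrite mem_filter bz eqxx.
Qed.

Lemma simple_nonperp u : u != 0 -> exists j, dotv u (alpha j) != 0.
Proof.
move=> u0; apply/existsP; apply: contraR u0 => /existsPn u_perp.
rewrite -dotvv_eq0 {2}(base_coordsE u) dotv_sumr big1 // => k _.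
by rewrite dotvZr (eqP (negPn (u_perp k))) mulr0.
Qed.

Section GoodToStandard.
Variables (theta : V) (Psi : seq V) (v : V) (s : seq V) (j : 'I_n).
Hypotheses (goodPsi : good_subsystem Phi Psi) (v0 : v != 0)
  (Psi_v : forall b, b \in Psi -> dotv b v = 0) (sPhi : {subset s <= Phi})
  (Du : dominant (wact s v)) (uj : dotv (wact s v) (alpha j) != 0).

Let s_aniso := root_aniso sPhi.
Let rev_sPhi : {subset rev s <= Phi}.
Proof. by move=> a; rewrite mem_rev => /sPhi. Qed.
Let PsiPhi : {subset Psi <= Phi}.
Proof. by case: goodPsi => -[]. Qed.

Lemma good_wact_coweight b : b \in Psi -> dotv (wact s b) (coweight j) = 0.
Proof.
move=> bPsi; apply: (dominant_perp_coweight Du uj); first exact/wact_root/PsiPhi.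
by rewrite wact_isometry // Psi_v.
Qed.

(* [Psi] is also cut out by the preimage of the [j]-th coweight, which forces
   every other simple root to be orthogonal to [wact s v]. *)
Lemma good_dominant_support k : k != j -> dotv (alpha k) (wact s v) = 0.
Proof.
move=> kj; set z := wact (rev s) (coweight j).
have z0 : z != 0.
  by rewrite -dotvv_eq0 wact_isometry ?(root_aniso rev_sPhi) // dotvv_eq0 coweight_neq0.
have Psi_z b : b \in Psi -> dotv b z = 0.
  by move=> bPsi; rewrite -(wact_isometry s_aniso) wactK_rev // good_wact_coweight.
have /Psi_v : wact (rev s) (alpha k) \in Psi.
  apply/(good_subsystemE goodPsi z0 Psi_z); split; first exact/wact_root/simple_root.
  by rewrite wact_isometry ?(root_aniso rev_sPhi) // dotv_coweight (negbTE kj).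
by rewrite -(wact_isometry s_aniso) wactK_rev.
Qed.

Lemma good_dominant_zspan b : b \in Psi <-> exists c,
  [/\ c \in Phi, in_zspan_del alpha theta ord0 (lift ord0 j) c & b = wact (rev s) c].
Proof.
split=> [bPsi|[c [cPhi cz ->]]].
  exists (wact s b); split; [exact/wact_root/PsiPhi | | by rewrite wact_revK].
  have [e be] := root_zcoords (wact_root sPhi (PsiPhi bPsi)).
  rewrite be -(zcomb_atil_ext_node0 alpha theta); apply: zspan_del_zcomb.
    by rewrite /ext_node0 unlift_none.
  apply/eqP; rewrite /ext_node0 liftK -(intr_eq0 R) -dotv_zcomb_coweight -be.
  by rewrite good_wact_coweight.
apply/(good_subsystemE goodPsi v0 Psi_v); split; first exact: wact_root.
rewrite -(wact_isometry s_aniso) wactK_rev //; apply: zspan_del_perp cz => k k0 kj.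
case: (unliftP ord0 k) k0 kj => [l ->|->]; last by rewrite eqxx.
by rewrite /atil liftK (inj_eq lift_inj) => _; apply: good_dominant_support.
Qed.

End GoodToStandard.

Lemma good_subsystem_conjugate (theta : V) (m : 'I_n -> nat) Psi : (0 < n)%N ->
  good_subsystem Phi Psi -> exists (i j : 'I_n.+1) (w : V -> V),
    [/\ i != j, coprime (mlab m i) (mlab m j), weyl Phi w &
        forall b, b \in Psi <->
          exists c, [/\ c \in Phi, in_zspan_del alpha theta i j c & b = w c]].
Proof.
move=> n_gt0 goodPsi; have [[_ _ _] rkPsi _] := goodPsi.
have rk_lt : (rk Psi < n)%N by rewrite rkPsi prednK.
have [v v0 Psi_v] := perp_exists rk_lt.
have [s sPhi Du] := dominant_conjugate v.
have [j uj] : exists j, dotv (wact s v) (alpha j) != 0.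
  by apply: simple_nonperp; rewrite -dotvv_eq0 wact_isometry ?root_aniso ?dotvv_eq0.
exists ord0, (lift ord0 j), (wact (rev s)); split.
- exact: neq_lift.
- by rewrite /mlab unlift_none coprime1n.
- by exists (rev s); split=> [a|//]; rewrite mem_rev => /sPhi.
- exact: (good_dominant_zspan theta goodPsi v0 Psi_v sPhi Du uj).
Qed.

Section AffineSimpleRoots.
Variables (theta : V) (m : 'I_n -> nat).
Hypotheses (theta_root : theta \in Phi) (thetaE : theta = ncomb alpha m).
Notation atl := (atil alpha theta).

Lemma atil_root k : atl k \in Phi.
Proof. by rewrite /atil; case: (unlift ord0 k) => [l|]; rewrite ?simple_root ?rootN. Qed.

Lemma atil_relation : \sum_k (mlab m k)%:R *: atl k = 0.
Proof.
rewrite big_ord_recl /mlab /atil unlift_none scale1r.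
under eq_bigr => l _ do rewrite liftK.
by rewrite thetaE addrC subrr.
Qed.

Lemma dotv_atil_determined z (g : 'I_n.+1 -> R) :
  (forall l, dotv (alpha l) z = g (lift ord0 l)) ->
  \sum_k (mlab m k)%:R * g k = 0 -> forall k, dotv (atl k) z = g k.
Proof.
move=> g_simple g_rel k; case: (unliftP ord0 k) => [l ->|->].
  by rewrite /atil liftK g_simple.
have rel : dotv (\sum_k (mlab m k)%:R *: atl k) z = \sum_k (mlab m k)%:R * g k.
  by rewrite atil_relation dotv0l g_rel.
rewrite dotv_suml !big_ord_recl in rel.
rewrite (eq_bigr (fun l => (mlab m (lift ord0 l))%:R * g (lift ord0 l))) in rel.
  by move/addIr: rel; rewrite /mlab unlift_none dotvZl !mul1r.
by move=> l _; rewrite dotvZl /atil liftK g_simple.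
Qed.

Definition atil_del (i j : 'I_n.+1) : seq V :=
  [seq atl k | k <- enum 'I_n.+1 & (k != i) && (k != j)].

Lemma mem_atil_del i j k : k != i -> k != j -> atl k \in atil_del i j.
Proof. by move=> ki kj; rewrite map_f // mem_filter ki kj mem_enum. Qed.

(* The relation expresses [atl q] through the other affine simple roots. *)
Lemma rk_atil_del p q : p != q -> mlab m q != 0%N -> (n <= (rk (atil_del p q)).+1)%N.
Proof.
move=> pq mq; set M := (mxs (atil_del p q) + atl p)%MS.
have del_M k : k != p -> k != q -> (atl k <= M)%MS.
  by move=> kp kq; rewrite (submx_trans _ (addsmxSl _ _)) // mem_mxs ?mem_atil_del.
have atl_M k : (atl k <= M)%MS.
  have [->|kp] := eqVneq k p; first exact: addsmxSr.
  have [->|kq] := eqVneq k q; last exact: del_M.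
  have := atil_relation; rewrite (bigD1 q) //= => /eqP; rewrite addr_eq0 => /eqP E.
  have mq0 : (mlab m q)%:R != 0 :> R by rewrite pnatr_eq0.
  rewrite -[atl q](scalerK mq0) E scalerN -scaleNr; apply: scalemx_sub.
  apply: summx_sub => l lq; apply: scalemx_sub.
  by have [->|lp] := eqVneq l p; [apply: addsmxSr | apply: del_M].
have base_M : (base_mx <= M)%MS.
  by apply/row_subP => l; rewrite rowK; have := atl_M (lift ord0 l); rewrite /atil liftK.
have := mxrankS base_M; case: HB => _ /eqP-> _ /leq_trans; apply.
apply: leq_trans (mxrank_adds_leqif _ _).1 _.
by rewrite -[X in (_ <= X)%N]addn1 leq_add2l rank_leq_row.
Qed.

Definition affine_coweight (k : 'I_n.+1) : V :=
  if unlift ord0 k is Some l then coweight l else 0.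

Lemma dotv_affine_coweight l k :
  dotv (alpha l) (affine_coweight k) = (lift ord0 l == k)%:R.
Proof.
rewrite /affine_coweight; case: (unliftP ord0 k) => [l' ->|->].
  by rewrite dotv_coweight (inj_eq lift_inj).
by rewrite dotv0r eq_sym (negbTE (neq_lift _ _)).
Qed.

Section TwoDeletedNodes.
Variables i j : 'I_n.+1.
Hypotheses (ij : i != j) (cop : coprime (mlab m i) (mlab m j)).
Notation zs := (in_zspan_del alpha theta i j).

Lemma mlab_del_gt0 : (0 < mlab m i)%N || (0 < mlab m j)%N.
Proof. by move: cop; case: (mlab m i); case: (mlab m j). Qed.

(* Orthogonal to every affine simple root but those of the nodes [i] and [j],
   on which it takes the values [m_j] and [- m_i], compatibly with the relation. *)
Definition del_normal : V :=
  (mlab m j)%:R *: affine_coweight i - (mlab m i)%:R *: affine_coweight j.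

Lemma dotv_atil_del_normal k : dotv (atl k) del_normal =
  (mlab m j)%:R * (k == i)%:R - (mlab m i)%:R * (k == j)%:R.
Proof.
move: k; apply: dotv_atil_determined => [l|].
  by rewrite /del_normal dotvBr !dotvZr !dotv_affine_coweight.
under eq_bigr => k _ do rewrite mulrBr !mulrA.
by rewrite sumrB !sumr_mul_delta mulrC subrr.
Qed.

Lemma del_normal_neq0 : del_normal != 0.
Proof.
apply: contraTneq mlab_del_gt0 => normal0.
have := dotv_atil_del_normal i; have := dotv_atil_del_normal j.
rewrite normal0 !dotv0r !eqxx eq_sym (negbTE ij) /= !mulr0 !mulr1 subr0 sub0r.
move=> /esym/eqP; rewrite oppr_eq0 pnatr_eq0 => /eqP-> /esym/eqP.
by rewrite pnatr_eq0 => /eqP->.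
Qed.

Lemma zspan_del_perp_normal b : zs b -> dotv b del_normal = 0.
Proof.
apply: zspan_del_perp => k ki kj.
by rewrite dotv_atil_del_normal (negbTE ki) (negbTE kj) !mulr0 subr0.
Qed.

(* The coordinates [e] of a root orthogonal to [del_normal] satisfy
   [e_i m_j = e_j m_i]; by coprimality, subtracting a multiple of the relation
   clears both. *)
Lemma perp_normal_zspan_del b : b \in Phi -> dotv b del_normal = 0 -> zs b.
Proof.
move=> bPhi b_normal; have [e0 be0] := root_zcoords bPhi.
move: be0; rewrite -(zcomb_atil_ext_node0 alpha theta); set e := ext_node0 e0 => be.
have : e i * (mlab m j)%:Z = e j * (mlab m i)%:Z.
  move: b_normal; rewrite be dotv_suml.
  under eq_bigr => k _ do rewrite dotvZl dotv_atil_del_normal mulrBr !mulrA.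
  rewrite sumrB !sumr_mul_delta => /eqP; rewrite subr_eq0 => /eqP.
  by move=> E; apply/eqP; rewrite -(eqr_int R) !intrM; apply/eqP; exact: E.
case/(coprime_int_eq cop) => t [ei ej].
have -> : b = zcomb atl (fun k => e k - t * (mlab m k)%:Z).
  rewrite be /zcomb; under [RHS]eq_bigr => k _ do rewrite intrB scalerBl intrM -scalerA.
  rewrite sumrB -scaler_sumr.
  have -> : \sum_k ((mlab m k)%:Z)%:~R *: atl k = 0 by rewrite -[RHS]atil_relation.
  by rewrite scaler0 subr0.
by apply: zspan_del_zcomb; rewrite ?ei ?ej subrr.
Qed.

Section ZspanSubsystem.
Variable Psi : seq V.
Hypothesis PsiE : forall b, b \in Psi <-> b \in Phi /\ zs b.

Lemma zspan_del_closed : closed_subsystem Phi Psi.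
Proof.
split=> [b /PsiE[] //|a b /PsiE[aPhi za] /PsiE[bPhi zb]|a b /PsiE[_ za] /PsiE[_ zb] abPhi].
  apply/PsiE; split; first exact: refl_root.
  case: HR => _ _ _ /(_ _ _ aPhi bPhi) /intrP[z ez].
  by rewrite /refl ez; apply: zspan_delB.
by apply/PsiE; split; last exact: zspan_delD.
Qed.

Lemma rk_zspan_del : rk Psi = n.-1.
Proof.
have lt_Psi : (rk Psi < n)%N.
  by apply: (rk_perp_lt del_normal_neq0) => b /PsiE[_ /zspan_del_perp_normal].
have del_Psi : {subset atil_del i j <= Psi}.
  move=> x /mapP[k]; rewrite mem_filter => /andP[/andP[ki kj] _] ->.
  by apply/PsiE; split; [apply: atil_root | apply: atil_zspan_del].
have atil_delC : {subset atil_del j i <= atil_del i j}.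
  by move=> x /mapP[k]; rewrite mem_filter => /andP[/andP[kj ki] _] ->; apply: mem_atil_del.
have rk_del : (n <= (rk (atil_del i j)).+1)%N.
  case/orP: mlab_del_gt0 => [mi|mj]; last by rewrite rk_atil_del // -lt0n.
  have ji : j != i by rewrite eq_sym.
  by rewrite (leq_trans (rk_atil_del ji _)) ?ltnS ?rk_subset // -lt0n.
have := rk_subset del_Psi; lia.
Qed.

Lemma zspan_del_good : good_subsystem Phi Psi.
Proof.
split=> [|//|Psi' [Psi'Phi _ _] rkPsi' sPsi b bPsi']; first exact: zspan_del_closed.
  exact: rk_zspan_del.
have PsiPsi' : (mxs Psi <= mxs Psi')%MS by apply/mxs_sub => x /sPsi/mem_mxs.
have Psi'Psi : (mxs Psi' <= mxs Psi)%MS.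
  by rewrite -(mxrank_leqif_sup PsiPsi').2 -/(rk _) -/(rk _) rk_zspan_del rkPsi'.
apply/PsiE; split; first exact: Psi'Phi.
apply: perp_normal_zspan_del; first exact: Psi'Phi.
apply: dotv_span_perp (submx_trans (mem_mxs bPsi') Psi'Psi) _.
by move=> a /PsiE[_ /zspan_del_perp_normal].
Qed.

End ZspanSubsystem.
End TwoDeletedNodes.
End AffineSimpleRoots.
End RootSystem.

Theorem theoremA (R : realType) (r : nat) (Phi : seq 'rV[R]_r)
    (alpha : 'I_r -> 'rV[R]_r) (theta : 'rV[R]_r) (m : 'I_r -> nat) :
  (0 < r)%N ->
  root_system Phi -> reduced Phi -> irreducible Phi ->
  is_base Phi alpha -> highest_root Phi alpha theta ->
  theta = ncomb alpha m ->
  (forall (i j : 'I_r.+1) (Psi : seq 'rV[R]_r),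
     i != j -> coprime (mlab m i) (mlab m j) ->
     (forall b, b \in Psi <-> (b \in Phi /\ in_zspan_del alpha theta i j b)) ->
     good_subsystem Phi Psi)
  /\
  (forall Psi : seq 'rV[R]_r, good_subsystem Phi Psi ->
     exists (i j : 'I_r.+1) (w : 'rV[R]_r -> 'rV[R]_r),
       [/\ i != j, coprime (mlab m i) (mlab m j), weyl Phi w &
           forall b, b \in Psi <->
             exists c, [/\ c \in Phi, in_zspan_del alpha theta i j c & b = w c]]).
Proof.
move=> r_gt0 HR _ _ HB [theta_root _] thetaE; split.
  by move=> i j Psi ij cop; apply: (zspan_del_good HR HB theta_root thetaE ij cop).
by move=> Psi; apply: (good_subsystem_conjugate HR HB theta m r_gt0).
Qed.
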